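(* Let $\theta_1,\theta_2\in(0,\pi/2)$ satisfy $\theta_1\cot\theta_1=\pi\cot\theta_2$. Then $$\frac{2\theta_1}{\sin\theta_1}+2\cos\theta_1-\pi>\frac{2\pi}{\sin\theta_2}-2\pi.$$ *)

From Stdlib Require Import Reals.
Open Scope R_scope.
Definition cot (x : R) : R := cos x / sin x.

(* Put c = cot t2.  Since (1 - sin t2)^2 >= 0 we have
   1 / sin t2 <= 1 + c^2 / 2, so the right-hand side is at most PI c^2.
   By hypothesis c = t1 cot t1 / PI, and clearing denominators shows
     LHS - PI c^2 = gap_poly PI t1 (sin t1) (cos t1) / (PI sin^2 t1),
   where gap_poly p a s k = 2 p a s + (2 p k - p^2) s^2 - a^2 k^2.
   It remains to show that this polynomial is positive on (0, PI/2).
   We split at 0.79 (< PI/4): near 0 we use Taylor bounds of sin and cos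
   at t1, near PI/2 the same bounds at e = PI/2 - t1.  In both cases the
   positivity reduces to a polynomial inequality in one variable and in
   p ranging over the enclosure 3.14 < PI < 3.15, which nra settles. *)

From Stdlib Require Import Reals Lra Psatz.
Open Scope R_scope.

Lemma PI_bounds : 3.14 < PI < 3.15.
Proof.
  pose proof (PI_2_3_7_ineq 1) as [Hlo Hhi].
  unfold sum_f_R0, tg_alt, PI_2_3_7_tg, Ratan_seq in Hlo, Hhi.
  simpl in Hlo, Hhi. lra.
Qed.

Lemma sin_taylor_bounds (a : R) : 0 <= a -> a <= PI ->
  a - a^3/6 <= sin a <= a - a^3/6 + a^5/120.
Proof.
  intros Ha0 HaPI. pose proof (sin_bound a 0 Ha0 HaPI) as [Hlo Hhi].
  unfold sin_approx, sum_f_R0, sin_term in Hlo, Hhi. simpl in Hlo, Hhi. lra.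
Qed.

Lemma cos_taylor_bounds (a : R) : - PI/2 <= a -> a <= PI/2 ->
  1 - a^2/2 + a^4/24 - a^6/720 <= cos a <= 1 - a^2/2 + a^4/24.
Proof.
  intros Hlo Hhi.
  pose proof (cos_bound a 1 Hlo Hhi) as [Hcos_lo _].
  pose proof (cos_bound a 0 Hlo Hhi) as [_ Hcos_hi].
  unfold cos_approx, sum_f_R0, cos_term in Hcos_lo, Hcos_hi.
  simpl in Hcos_lo, Hcos_hi. lra.
Qed.

(* For any t with sin t > 0:  1 / sin t <= 1 + cot^2 t / 2,
   equivalently (1 - sin t)^2 >= 0.  This bounds the right-hand side. *)
Lemma inv_sin_le_cot_sq (t : R) : 0 < sin t -> 1 / sin t <= 1 + (cot t)^2 / 2.
Proof.
  intros Hs. pose proof (sin2_cos2 t) as Hpyth. unfold Rsqr in Hpyth.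
  unfold cot.
  assert (Hdiff : 1 + (cos t / sin t)^2 / 2 - 1 / sin t
                  = (1 - sin t)^2 / (2 * (sin t)^2)).
  { assert (Hcos2 : cos t ^ 2 = 1 - sin t ^ 2) by nra.
    replace ((cos t / sin t)^2) with ((1 - (sin t)^2) / (sin t)^2)
      by (rewrite <- Hcos2; field; lra).
    field. lra. }
  assert (0 <= (1 - sin t)^2 / (2 * (sin t)^2)).
  { apply Rmult_le_pos; [nra | apply Rlt_le, Rinv_0_lt_compat; nra]. }
  lra.
Qed.

Definition gap_poly (p a s k : R) : R := 2*p*a*s + (2*p*k - p^2)*s^2 - a^2*k^2.

(* One-variable polynomial inequality behind the case t1 <= 0.79
   (here x stands for t1^2). *)
Lemma small_angle_poly (x p : R) : 0 <= x <= 0.64 -> 3.14 <= p <= 3.15 ->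
  2*p*(1 - 0.16*x) + (2*p*(1 - x/2) - p^2)*(1 - 0.16*x)^2 - (1 - x/2)^2 > 0.
Proof.
  intros Hx Hp.
  assert (0 <= (p-3.14)*(3.15-p)) by nra.
  assert (0 <= x*(0.64-x)) by nra.
  assert (0 <= x*x) by nra.
  assert (0 <= x*(p-3.14)) by nra.
  assert (0 <= x*(3.15-p)) by nra.
  assert (0 <= x*x*(p-3.14)) by nra.
  assert (0 <= x*x*(3.15-p)) by nra.
  assert (0 <= x*x*x) by nra.
  nra.
Qed.

(* One-variable polynomial inequality behind the case t1 > 0.79
   (here e stands for PI/2 - t1). *)
Lemma near_right_angle_poly (e p : R) : 0 <= e <= 0.79 -> 3.14 <= p <= 3.15 ->
  p*(1-e^2/2)*(p/2 - p*e^2/24 - 4*e/3 + e^3/6) > (p/2 - e)^2.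
Proof.
  intros He Hp.
  assert (0 <= (p-3.14)*(3.15-p)) by nra.
  assert (0 <= e*(0.79-e)) by nra.
  assert (0 <= e*e) by nra.
  assert (0 <= e*(p-3.14)) by nra.
  assert (0 <= e*(3.15-p)) by nra.
  assert (0 <= e*e*(p-3.14)) by nra.
  assert (0 <= e*e*(3.15-p)) by nra.
  nra.
Qed.

(* gap_poly is positive whenever s and k lie in the polynomial enclosures
   of sin a and cos a valid for 0 < a <= 0.79.  gap_poly decreases in s
   and increases in k on this range, so it suffices to evaluate it at
   s = a (1 - 0.16 a^2), k = 1 - a^2/2, which is a^2 times small_angle_poly. *)
Lemma gap_poly_pos_small (p a s k : R) :
  3.14 <= p <= 3.15 -> 0 < a <= 0.79 ->
  a*(1 - a^2/6) <= s <= a*(1 - 0.16*a^2) -> 1 - a^2/2 <= k <= 1 ->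
  gap_poly p a s k > 0.
Proof.
  intros Hp Ha [Hs_lo Hs_hi] [Hk_lo Hk_hi].
  set (su := a*(1 - 0.16*a^2)) in *. set (kl := 1 - a^2/2) in *.
  assert (Ha2 : 0 < a^2 <= 0.64) by nra.
  assert (Hdecr_s : gap_poly p a s k >= gap_poly p a su k).
  { assert (E : gap_poly p a s k - gap_poly p a su k
                = (s - su)*(2*p*a + (2*p*k - p^2)*(s+su))) by (unfold gap_poly; ring).
    assert (Hsum : s + su >= 2*a*(1-a^2/6)) by (unfold su in *; nra).
    assert (Hcoef : p^2 - 2*p*k >= 3.57) by nra.
    assert ((p^2 - 2*p*k)*(s+su) >= 3.57*(2*a*(1-a^2/6))).
    { apply Rge_trans with (3.57 * (s+su)); [| nra].
      apply Rle_ge, Rmult_le_compat_r; nra. }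
    assert (2*p*a + (2*p*k - p^2)*(s+su) <= 0) by nra.
    nra. }
  assert (Hincr_k : gap_poly p a su k >= gap_poly p a su kl).
  { assert (E : gap_poly p a su k - gap_poly p a su kl
                = (k - kl)*(2*p*su^2 - a^2*(k+kl))) by (unfold gap_poly; ring).
    assert (su >= 0.89*a) by (unfold su; nra).
    assert (su^2 >= 0.79*a^2) by nra.
    assert (a^2*(k+kl) <= 2*a^2) by nra.
    assert (0 <= 2*p*su^2 - a^2*(k+kl)) by nra.
    assert (0 <= (k - kl)*(2*p*su^2 - a^2*(k+kl))) by (apply Rmult_le_pos; lra).
    lra. }
  assert (Hcorner : gap_poly p a su kl = a^2 * (2*p*(1 - 0.16*a^2)
            + (2*p*(1 - a^2/2) - p^2)*(1 - 0.16*a^2)^2 - (1 - a^2/2)^2)).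
  { unfold gap_poly, su, kl. ring. }
  pose proof (small_angle_poly (a^2) p ltac:(lra) Hp) as Hpoly.
  assert (gap_poly p a su kl > 0) by (rewrite Hcorner; apply Rmult_lt_0_compat; lra).
  lra.
Qed.

(* Same conclusion near PI/2: with a = p/2 - e, sin a = C and cos a = S
   where S, C lie in the polynomial enclosures of sin e and cos e. *)
Lemma gap_poly_pos_near_right_angle (p e S C : R) :
  3.14 <= p <= 3.15 -> 0 < e <= 0.79 ->
  e - e^3/6 <= S <= e -> 1 - e^2/2 <= C <= 1 - e^2/2 + e^4/24 ->
  gap_poly p (p/2 - e) C S > 0.
Proof.
  intros Hp He [HS_lo HS_hi] [HC_lo HC_hi].
  assert (He2 : 0 < e^2 <= 0.6241) by nra.
  assert (HS0 : 0 <= e - e^3/6) by nra.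
  assert (HC0 : 0 < 1 - e^2/2) by nra.
  assert (E : gap_poly p (p/2 - e) C S
              = p*C*(p*(1-C) - 2*e + 2*S*C) - (p/2-e)^2*S^2) by (unfold gap_poly; field).
  assert (HSC : (e - e^3/6)*(1-e^2/2) <= S*C) by (apply Rmult_le_compat; lra).
  assert (Hinner : p*(1-C) - 2*e + 2*S*C >= e^2*(p/2 - p*e^2/24 - 4*e/3 + e^3/6)) by nra.
  pose proof (near_right_angle_poly e p ltac:(lra) Hp) as Hpoly.
  assert (Hpos : 0 < p/2 - p*e^2/24 - 4*e/3 + e^3/6).
  { assert (0 < p*(1-e^2/2)) by nra. nra. }
  assert (Hfirst : p*C*(p*(1-C) - 2*e + 2*S*C)
                   >= p*(1-e^2/2)*(e^2*(p/2 - p*e^2/24 - 4*e/3 + e^3/6))).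
  { apply Rle_ge, Rmult_le_compat; nra. }
  assert (Hsecond : (p/2-e)^2*S^2 <= (p/2-e)^2*e^2).
  { apply Rmult_le_compat_l; nra. }
  assert (p*(1-e^2/2)*(e^2*(p/2 - p*e^2/24 - 4*e/3 + e^3/6)) > (p/2-e)^2*e^2).
  { replace (p*(1-e^2/2)*(e^2*(p/2 - p*e^2/24 - 4*e/3 + e^3/6))) with
      (e^2 * (p*(1-e^2/2)*(p/2 - p*e^2/24 - 4*e/3 + e^3/6))) by ring.
    rewrite (Rmult_comm ((p/2-e)^2)). apply Rmult_lt_compat_l; lra. }
  lra.
Qed.

Lemma gap_poly_pos (t : R) : 0 < t < PI/2 -> gap_poly PI t (sin t) (cos t) > 0.
Proof.
  intros Ht. pose proof PI_bounds as Hp.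
  destruct (Rle_lt_dec t 0.79) as [Hsmall | Hlarge].
  - pose proof (sin_taylor_bounds t ltac:(lra) ltac:(lra)) as Hs.
    pose proof (cos_taylor_bounds t ltac:(lra) ltac:(lra)) as Hc.
    assert (Ht2 : 0 < t^2 <= 0.64) by nra.
    assert (t^4 <= 0.64 * t^2) by nra.
    assert (t^5 <= 0.64 * t^3) by nra.
    assert (t^6 <= 0.64 * t^4) by nra.
    apply gap_poly_pos_small; nra.
  - set (e := PI/2 - t).
    replace t with (PI/2 - e) by (unfold e; ring).
    rewrite sin_shift, cos_shift.
    assert (He : 0 < e <= 0.79) by (unfold e; lra).
    clearbody e.
    pose proof (sin_taylor_bounds e ltac:(lra) ltac:(lra)) as Hs.
    pose proof (cos_taylor_bounds e ltac:(lra) ltac:(lra)) as Hc.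
    assert (He2 : 0 < e^2 <= 0.6241) by nra.
    assert (e^5 <= 0.6241 * e^3) by nra.
    assert (e^6 <= 0.6241 * e^4) by nra.
    assert (0 < e^4) by nra.
    apply gap_poly_pos_near_right_angle; nra.
Qed.

Lemma lhs_minus_cot_sq (t1 c : R) : 0 < sin t1 -> c = t1 * cot t1 / PI ->
  2 * t1 / sin t1 + 2 * cos t1 - PI - PI * c^2
  = gap_poly PI t1 (sin t1) (cos t1) / (PI * (sin t1)^2).
Proof.
  intros Hs ->. pose proof PI_RGT_0. unfold gap_poly, cot. field. lra.
Qed.

Theorem lemma4p2 (t1 t2 : R)
  (h1 : 0 < t1 < PI / 2) (h2 : 0 < t2 < PI / 2)
  (heq : t1 * cot t1 = PI * cot t2) :
  2 * t1 / sin t1 + 2 * cos t1 - PI > 2 * PI / sin t2 - 2 * PI.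
Proof.
  pose proof PI_RGT_0 as HPI.
  assert (Hs1 : 0 < sin t1) by (apply sin_gt_0; lra).
  assert (Hs2 : 0 < sin t2) by (apply sin_gt_0; lra).
  assert (Hcot2 : cot t2 = t1 * cot t1 / PI) by (rewrite heq; field; lra).
  assert (Hrhs : 2 * PI / sin t2 - 2 * PI <= PI * (cot t2)^2).
  { pose proof (inv_sin_le_cot_sq t2 Hs2) as Hinv.
    replace (2 * PI / sin t2) with (2 * PI * (1 / sin t2)) by (field; lra).
    assert (2 * PI * (1 / sin t2) <= 2 * PI * (1 + (cot t2)^2 / 2))
      by (apply Rmult_le_compat_l; lra).
    lra. }
  assert (Hlhs : 2 * t1 / sin t1 + 2 * cos t1 - PI - PI * (cot t2)^2 > 0).
  { rewrite (lhs_minus_cot_sq t1 (cot t2) Hs1 Hcot2).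
    apply Rdiv_lt_0_compat; [apply gap_poly_pos; exact h1 | apply Rmult_lt_0_compat; [lra | apply pow_lt; lra]]. }
  lra.
Qed.
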